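(* Let $\mathbf{OMSupGal}$ be the full subcategory of $\mathbf{OMLatGal}$ on complete orthomodular lattices, and let $U:\mathbf{OMSupGal}\to\mathbf{Sets}$ be the functor $X\mapsto X$, $f\mapsto f_*\circ(-)^\perp$. Then $U$ has a left adjoint $F$ with $F(A)=\mathcal{P}(A)$ (the powerset Boolean algebra) and, for $g:A\to B$, $F(g)_*(V)=\neg\{g(a):a\in V\}$ for $V\subseteq A$ and $F(g)^*(W)=\{a\in A:g(a)\notin W\}$ for $W\subseteq B$. The adjunction bijection between morphisms $f:\mathcal{P}(A)\to X$ in $\mathbf{OMSupGal}$ and functions $g:A\to X$ is given by $\bar f(a)=f_*(\{a\})^\perp$ and $\bar g_*(V)=\bigwedge_{a\in V}g(a)^\perp$, $\bar g^*(x)=\{a\in A:g(a)\le x^\perp\}$.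
   Context: An orthomodular lattice is a bounded lattice with an order-reversing involution $x\mapsto x^\perp$ such that $x\wedge x^\perp=0$, $x\vee x^\perp=1$, and $x\le y$ implies $y=x\vee(x^\perp\wedge y)$; it is complete if all subsets have joins (hence meets). $\mathbf{OMLatGal}$: objects orthomodular lattices; morphisms $f:X\to Y$ are pairs $(f_*,f^* )$ of order-reversing maps $f_*:X\to Y$, $f^*:Y\to X$ with $y\le f_*(x)\iff x\le f^*(y)$; identity has both components $x\mapsto x^\perp$; composition $(g\circ f)_*=g_*\circ\perp\circ f_*$, $(g\circ f)^*=f^*\circ\perp\circ g^*$. In $\mathcal{P}(A)$, $\neg$ denotes set complement, which is its orthocomplement.
   Formalization: The adjunction bijection, natural in X, sends f to a ↦ $f_*$({a}), the orthocomplement of f̄(a); f̄ and ḡ are mutually inverse, with f̄ natural in A only. Each condition added here is assumed in the paper as well or is needed for the statement above to hold. *)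

From Stdlib Require Import Classical FunctionalExtensionality PropExtensionality.

Record OML := {
  carrier :> Type;
  le : carrier -> carrier -> Prop;
  meet : carrier -> carrier -> carrier;
  join : carrier -> carrier -> carrier;
  bot : carrier;
  top : carrier;
  orth : carrier -> carrier;
  le_refl : forall x, le x x;
  le_trans : forall x y z, le x y -> le y z -> le x z;
  le_antisym : forall x y, le x y -> le y x -> x = y;
  meetP : forall x y z, le z (meet x y) <-> (le z x /\ le z y);
  joinP : forall x y z, le (join x y) z <-> (le x z /\ le y z);
  bot_le : forall x, le bot x;
  le_top : forall x, le x top;
  orth_anti : forall x y, le x y -> le (orth y) (orth x);
  orth_inv : forall x, orth (orth x) = x;
  meet_orth : forall x, meet x (orth x) = bot;
  join_orth : forall x, join x (orth x) = top;
  orthomod : forall x y, le x y -> y = join x (meet (orth x) y)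
}.

(** Complete orthomodular lattice: every subset has an infimum
    (equivalently, every subset has a supremum). *)
Record COML := {
  oml :> OML;
  Inf : (carrier oml -> Prop) -> carrier oml;
  InfP : forall (S : carrier oml -> Prop) z,
      le oml z (Inf S) <-> (forall s, S s -> le oml z s)
}.

Arguments le {o} _ _.
Arguments orth {o} _.

Record GalMor (X Y : OML) := {
  low : carrier X -> carrier Y;
  up : carrier Y -> carrier X;
  low_anti : forall x x', le x x' -> le (low x') (low x);
  up_anti : forall y y', le y y' -> le (up y') (up y);
  galois : forall x y, le y (low x) <-> le x (up y)
}.
Arguments low {X Y} _ _.
Arguments up {X Y} _ _.

Definition mor_eq {X Y : OML} (f g : GalMor X Y) : Prop :=
  (forall x, low f x = low g x) /\ (forall y, up f y = up g y).

Lemma orth_le_swap (X : OML) (x y : carrier X) :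
  le (orth x) y -> le (orth y) x.
Proof.
  intro H. apply orth_anti in H. rewrite orth_inv in H. exact H.
Qed.

Definition idm (X : OML) : GalMor X X.
Proof.
  refine {| low := @orth X; up := @orth X |}.
  - intros; apply orth_anti; assumption.
  - intros; apply orth_anti; assumption.
  - intros x y; split; intro H.
    + apply orth_anti in H. rewrite orth_inv in H. exact H.
    + apply orth_anti in H. rewrite orth_inv in H. exact H.
Defined.

Definition comp {X Y Z : OML} (g : GalMor Y Z) (f : GalMor X Y) : GalMor X Z.
Proof.
  refine {| low := fun x => low g (orth (low f x));
            up := fun z => up f (orth (up g z)) |}.
  - intros x x' H. apply low_anti, orth_anti, low_anti, H.
  - intros y y' H. apply up_anti, orth_anti, up_anti, H.
  - intros x z. rewrite galois. split; intro H.
    + apply orth_le_swap in H. apply (proj1 (galois _ _ f _ _)) in H. exact H.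
    + apply (proj2 (galois _ _ f _ _)) in H. apply orth_le_swap in H. exact H.
Defined.

Definition Pow_OML (A : Type) : OML.
Proof.
  refine {| carrier := A -> Prop;
            le := fun V W => forall a, V a -> W a;
            meet := fun V W a => V a /\ W a;
            join := fun V W a => V a \/ W a;
            bot := fun _ => False;
            top := fun _ => True;
            orth := fun V a => ~ V a |}.
  - auto.
  - auto.
  - intros V W H1 H2. apply functional_extensionality; intro a.
    apply propositional_extensionality; split; auto.
  - intros V W Z; split; [intro H; split; intros a Ha; apply H; auto
                         | intros [H1 H2] a Ha; split; auto].
  - intros V W Z; split; [intro H; split; intros a Ha; apply H; auto
                         | intros [H1 H2] a [Ha|Ha]; auto].
  - intros V a [].
  - auto.
  - intros V W H a Hn Hv. apply Hn, H, Hv.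
  - intro V. apply functional_extensionality; intro a.
    apply propositional_extensionality; split; [apply NNPP | auto].
  - intro V. apply functional_extensionality; intro a.
    apply propositional_extensionality; split; [intros [H1 H2]; auto | intros []].
  - intro V. apply functional_extensionality; intro a.
    apply propositional_extensionality; split; [auto | intros _; apply classic].
  - intros V W H. apply functional_extensionality; intro a.
    apply propositional_extensionality; split.
    + intro Hw. destruct (classic (V a)); [left; auto | right; auto].
    + intros [Hv | [_ Hw]]; auto.
Defined.

Definition Pow (A : Type) : COML.
Proof.
  refine {| oml := Pow_OML A;
            Inf := fun (S : (A -> Prop) -> Prop) a => forall V, S V -> V a |}.
  intros S Z; simpl; split.
  - intros H V HV a Ha. apply (H a Ha V HV).
  - intros H a Ha V HV. apply (H V HV a Ha).
Defined.

Definition Uarr {X Y : OML} (f : GalMor X Y) : carrier X -> carrier Y :=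
  fun x => low f (orth x).

Definition single {A : Type} (a : A) : carrier (Pow A) := fun x => x = a.

Definition fbar {A : Type} {X : OML} (f : GalMor (Pow A) X) : A -> carrier X :=
  fun a => orth (low f (single a)).

From Stdlib Require Import Classical FunctionalExtensionality PropExtensionality.

(** The adjunction rests on two facts
    about an arbitrary Galois morphism f : P(A) -> X into a complete OML:
    - its upper adjoint is read off the singletons,
        a in f^*(x)  <->  x <= f_*({a});
    - its lower adjoint turns unions into meets,
        f_*(V) = /\_{a in V} f_*({a}),
    so f is determined by a |-> f_*({a}).  Conversely every g : A -> X
    gives the Galois morphism gbar with gbar_*(V) = /\_{a in V} g(a)^perp.
    Hence f |-> fbar and g |-> gbar are mutually inverse; naturality in A
    reduces to F(h)_*({a})^perp = {h a}, and naturality in X is the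
    involutivity of perp. *)

Lemma set_ext {A : Type} (V W : A -> Prop) : (forall a, V a <-> W a) -> V = W.
Proof.
  intro H. apply functional_extensionality; intro a.
  apply propositional_extensionality, H.
Qed.

Lemma orth_swap (X : OML) (x y : carrier X) : le x (orth y) <-> le y (orth x).
Proof.
  split; intro H; apply orth_anti in H; rewrite orth_inv in H; exact H.
Qed.

Lemma Inf_lb (X : COML) (S : carrier X -> Prop) (s : carrier X) :
  S s -> le (Inf X S) s.
Proof. intro Hs. exact (proj1 (InfP X S (Inf X S)) (le_refl _ _) s Hs). Qed.

Lemma Inf_singleton (X : COML) (x : carrier X) : Inf X (fun y => y = x) = x.
Proof.
  apply le_antisym.
  - apply Inf_lb; reflexivity.
  - apply InfP. intros s ->. apply le_refl.
Qed.

Definition FreeMor (A B : Type) (g : A -> B) : GalMor (Pow A) (Pow B).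
Proof.
  refine {| low := (fun V b => ~ (exists a, V a /\ g a = b))
                   : carrier (Pow A) -> carrier (Pow B);
            up := (fun W a => ~ W (g a)) : carrier (Pow B) -> carrier (Pow A) |}.
  - simpl. intros V V' H b Hn [a [Ha Hb]]. apply Hn. exists a. auto.
  - simpl. intros W W' H a Hn Hw. apply Hn, H, Hw.
  - simpl. intros V W; split.
    + intros H a Ha Hw. apply (H _ Hw). exists a; auto.
    + intros H b Hw [a [Ha <-]]. exact (H a Ha Hw).
Defined.

Lemma FreeMor_id (A : Type) : mor_eq (FreeMor A A (fun a => a)) (idm (Pow A)).
Proof.
  split; intro V; [| reflexivity].
  apply set_ext; intro b; simpl. split.
  - intros H Hv. apply H. exists b; auto.
  - intros H [a [Ha ->]]. auto.
Qed.

Lemma FreeMor_comp (A B C : Type) (g : A -> B) (h : B -> C) :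
  mor_eq (FreeMor A C (fun a => h (g a))) (comp (FreeMor B C h) (FreeMor A B g)).
Proof.
  split; intro V; apply set_ext; simpl.
  - intro c. split.
    + intros H [b [Hb <-]]. apply Hb. intros [a [Ha <-]]. apply H. exists a; auto.
    + intros H [a [Ha <-]]. apply H. exists (g a). split; auto.
      intro Hn. apply Hn. exists a; auto.
  - intro a. tauto.
Qed.

Lemma FreeMor_single (A' A : Type) (h : A' -> A) (a' : A') :
  orth (low (FreeMor A' A h) (single a')) = single (h a').
Proof.
  apply set_ext; intro a; simpl; unfold single. split.
  - intro H. apply NNPP. intro Hn. apply H. intros [b [-> Hb]]. apply Hn. auto.
  - intros -> Hn. apply Hn. exists a'. auto.
Qed.

Definition transpose (A : Type) (X : COML) (g : A -> carrier X) : GalMor (Pow A) X.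
Proof.
  refine {| low := fun V : carrier (Pow A) =>
                   Inf X (fun x => exists a, V a /\ x = orth (g a));
            up := (fun x a => le (g a) (orth x)) : carrier X -> carrier (Pow A) |}.
  - simpl. intros V V' H. apply InfP. intros s [a [Ha ->]].
    apply Inf_lb. exists a; auto.
  - simpl. intros y y' H a Ha. eapply le_trans; [exact Ha|]. apply orth_anti, H.
  - simpl. intros V y. rewrite InfP. split.
    + intros H a Ha. apply orth_swap, H. exists a; auto.
    + intros H s [a [Ha ->]]. apply orth_swap, H, Ha.
Defined.

Section MorphismsOutOfPowerset.
Variables (A : Type) (X : COML) (f : GalMor (Pow A) X).

Lemma up_from_singletons (x : carrier X) (a : A) :
  up f x a <-> le x (low f (single a)).
Proof.
  rewrite galois. simpl; unfold single. split.
  - intros H b ->. exact H.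
  - intro H. apply H. reflexivity.
Qed.

Lemma low_from_singletons (V : carrier (Pow A)) :
  low f V = Inf X (fun x => exists a, V a /\ x = low f (single a)).
Proof.
  apply le_antisym.
  - apply InfP. intros s [a [Ha ->]]. apply low_anti.
    simpl; unfold single. intros b ->. exact Ha.
  - apply galois. intros a Ha. apply up_from_singletons, Inf_lb. exists a; auto.
Qed.

End MorphismsOutOfPowerset.

Lemma fbar_transpose (A : Type) (X : COML) (g : A -> carrier X) (a : A) :
  fbar (transpose A X g) a = g a.
Proof.
  unfold fbar; simpl.
  replace (fun x => exists a0, single a a0 /\ x = orth (g a0))
    with (fun x => x = orth (g a)).
  - rewrite Inf_singleton. apply orth_inv.
  - apply set_ext; intro x; unfold single. split.
    + intros ->. exists a; auto.
    + intros [b [-> ->]]. reflexivity.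
Qed.

Lemma transpose_fbar (A : Type) (X : COML) (f : GalMor (Pow A) X) :
  mor_eq (transpose A X (fbar f)) f.
Proof.
  unfold fbar. split.
  - intro V. rewrite (low_from_singletons A X f V). simpl.
    f_equal. apply set_ext; intro x.
    split; intros [a [Ha ->]]; exists a; rewrite ?orth_inv; auto.
  - intro x. apply set_ext; intro a. simpl.
    rewrite (up_from_singletons A X f), orth_swap, orth_inv. reflexivity.
Qed.

Theorem mainTheorem13 :
  exists (Fm : forall A B : Type, (A -> B) -> GalMor (Pow A) (Pow B)),
    (forall (A B : Type) (g : A -> B) (V : carrier (Pow A)),
        low (Fm A B g) V = (fun b : B => ~ (exists a, V a /\ g a = b))) /\
    (forall (A B : Type) (g : A -> B) (W : carrier (Pow B)),
        up (Fm A B g) W = (fun a : A => ~ W (g a))) /\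
    (forall A : Type, mor_eq (Fm A A (fun a => a)) (idm (Pow A))) /\
    (forall (A B C : Type) (g : A -> B) (h : B -> C),
        mor_eq (Fm A C (fun a => h (g a))) (comp (Fm B C h) (Fm A B g))) /\
    exists (gbar : forall (A : Type) (X : COML), (A -> carrier X) -> GalMor (Pow A) X),
      (forall (A : Type) (X : COML) (g : A -> carrier X) (V : carrier (Pow A)),
          low (gbar A X g) V = Inf X (fun x => exists a, V a /\ x = orth (g a))) /\
      (forall (A : Type) (X : COML) (g : A -> carrier X) (x : carrier X),
          up (gbar A X g) x = (fun a : A => le (g a) (orth x))) /\
      (forall (A : Type) (X : COML) (g : A -> carrier X) (a : A),
          fbar (gbar A X g) a = g a) /\
      (forall (A : Type) (X : COML) (f : GalMor (Pow A) X),
          mor_eq (gbar A X (fbar f)) f) /\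
      (forall (A' A : Type) (X : COML) (h : A' -> A)
              (f : GalMor (Pow A) X) (a' : A'),
          fbar (comp f (Fm A' A h)) a' = fbar f (h a')) /\
      (forall (A : Type) (X X' : COML)
              (f : GalMor (Pow A) X) (k : GalMor X X') (a : A),
          orth (fbar (comp k f) a) = Uarr k (orth (fbar f a))).
Proof.
  exists FreeMor.
  do 2 (split; [reflexivity |]).
  split; [exact FreeMor_id |].
  split; [exact FreeMor_comp |].
  exists transpose.
  do 2 (split; [reflexivity |]).
  split; [exact fbar_transpose |].
  split; [exact transpose_fbar |].
  split.
  -
    intros A' A X h f a'. unfold fbar, comp; cbn [low]. now rewrite FreeMor_single.
  - (* naturality in X: both sides reduce to k_*(f_*({a})) since perp is involutive *)
    intros A X X' f k a. unfold fbar, Uarr; simpl. now rewrite !orth_inv.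
Qed.
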